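(* Let $G$ be a finite simple graph with a $C_3$-free vertex $x$, and let $X=N_G[x]$, so that the induced subgraph on $X$ is a star $K_{1,m}$ with center $x$ and $m\ge 1$. Let $\pi:V(G)\to V(G')$ be a bijection such that: (i) $\pi(v)=v'$ for every $v\in V(G)\setminus X$; (ii) $\pi(v)\neq v'$ for every $v\in X$; (iii) if $m\ge 2$, then for all $u,v\in X$, $\pi(v)=u'$ implies $\pi(u)\neq v'$. Then no separable $\gamma$-set of $G$ is effective under $\pi$.
   Context: For a graph $G$, a set $D\subseteq V(G)$ is dominating if every vertex not in $D$ has a neighbor in $D$; $\gamma(G)$ is the minimum size of a dominating set, and a $\gamma$-set is a dominating set of size $\gamma(G)$. For sets $D,S$ write $D\succ S$ if every vertex of $S$ has a neighbor in $D$. Let $G'$ be a disjoint copy of $G$, the copy of $v\in V(G)$ being denoted $v'$ and $A'=\{v':v\in A\}$. A $\gamma$-set $A$ of $G$ is separable (an $A_1$-$\gamma$-set) if it can be partitioned into two nonempty sets $A_1,A_2$ with $A_1\succ V(G)\setminus A$. Given such a partition and a bijection $\pi:V(G)\to V(G')$, put $B_1'=\pi(A_1)$, $B_2'=\pi(A_2)$, $B'=\pi(A)$. The separable $\gamma$-set $A=A_1\cup A_2$ is effective under $\pi$ if $B'$ is a $B_2'$-$\gamma$-set of $G'$, i.e. $B'$ is a $\gamma$-set of $G'$ partitioned into the nonempty sets $B_1',B_2'$ with $B_2'\succ V(G')\setminus B'$. A non-isolated vertex is $C_3$-free if it belongs to no triangle of $G$. *)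

From mathcomp Require Import all_boot all_fingroup.
Set Implicit Arguments. Unset Strict Implicit. Unset Printing Implicit Defensive.

Section Graphs.
Variables (T : finType) (e : rel T).

Definition simple_graph := symmetric e /\ irreflexive e.

Definition dominating (D : {set T}) :=
  forall v, v \notin D -> exists2 d, d \in D & e d v.

Definition gamma_set (D : {set T}) :=
  dominating D /\ forall D' : {set T}, dominating D' -> #|D| <= #|D'|.

Definition dom_over (D S : {set T}) :=
  forall s, s \in S -> exists2 d, d \in D & e d s.

Definition separable_partition (A A1 A2 : {set T}) :=
  [/\ gamma_set A, A1 :|: A2 = A, [disjoint A1 & A2],
      A1 != set0 /\ A2 != set0 & dom_over A1 (~: A)].

(* The copy G' of G is taken on the same vertex type with the same edges,
   the copy v' of v being v itself.  Effective under pi: B' = pi(A) is a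
   B2'-gamma-set of G' partitioned into B1' = pi(A1), B2' = pi(A2). *)
Definition effective (pi : {perm T}) (A A1 A2 : {set T}) :=
  separable_partition (pi @: A) (pi @: A2) (pi @: A1).

Definition nbhd (x : T) : {set T} := [set v | e x v].
Definition cnbhd (x : T) : {set T} := x |: nbhd x.

Definition C3_free_vertex (x : T) :=
  (exists v, e x v) /\ ~ (exists u v, [&& e x u, e x v & e u v]).

End Graphs.

From mathcomp Require Import all_boot all_fingroup.
From mathcomp Require Import zify.
Set Implicit Arguments. Unset Strict Implicit. Unset Printing Implicit Defensive.

(* Suppose A = A1 u A2 is an
   A1-gamma-set that is effective under pi, i.e. B = pi(A) is a gamma-set
   partitioned into B1 = pi(A2), B2 = pi(A1) with B1 >- V \ B.
   Two facts about any separable gamma-set A = A1 u A2 drive the proof, both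
   by minimality of A: a vertex of A2 has no neighbour in A, and a vertex
   outside A has at most one neighbour in A2.
   The configuration is symmetric: (pi^-1, B, B1, B2) satisfies the same
   hypotheses as (pi, A, A1, A2).  Using C3-freeness one shows x \notin A,
   hence by symmetry x \notin B, and that pi maps A n N(x) into itself.  Then
   A n N(x) consists of exactly two vertices, d in A1 and c in A2, and pi,
   having no fixed point in X, swaps them.  So |N(x)| >= 2 and pi contains
   the 2-cycle (c d) inside X, which hypothesis (iii) forbids. *)

Section SeparableGammaSets.
Variables (T : finType) (e : rel T).
Implicit Types (A : {set T}) (a b v : T).

Lemma sep_mem A A1 A2 a : separable_partition e A A1 A2 ->
  (a \in A) = (a \in A1) || (a \in A2).
Proof. by case=> _ <- *; rewrite inE. Qed.

Lemma sep_parts_disjoint A A1 A2 a : separable_partition e A A1 A2 ->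
  a \in A1 -> a \in A2 -> False.
Proof. by case=> _ _ dis _ _ h1; rewrite (disjointFr dis h1). Qed.

Lemma sep_dominated A A1 A2 v : separable_partition e A A1 A2 ->
  v \notin A -> exists2 d, d \in A1 & e d v.
Proof. by case=> _ _ _ _ domA1 vA; apply: domA1; rewrite inE. Qed.

(* A vertex outside A has at most one neighbour in A2: two such neighbours
   could be traded for the vertex itself, giving a smaller dominating set. *)
Lemma sep_part2_private A A1 A2 v a1 a2 : separable_partition e A A1 A2 ->
  v \notin A -> a1 \in A2 -> a2 \in A2 -> e v a1 -> e v a2 -> a1 = a2.
Proof.
move=> HA vA a1A2 a2A2 e1 e2; apply/eqP/negPn/negP => a12.
have a1A : a1 \in A by rewrite (sep_mem _ HA) a1A2 orbT.
have a2A : a2 \in A by rewrite (sep_mem _ HA) a2A2 orbT.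
case: HA => [[_ minA] eqA dis _ domA1].
have A1_avoids_A2 a d : a \in A2 -> d \in A1 -> d != a.
  by move=> aA2 dA1; apply: contraTneq dA1 => ->; rewrite (disjointFl dis aA2).
have : dominating e (v |: ((A :\ a1) :\ a2)).
  move=> w hw.
  case: (eqVneq w a1) => [->|wa1]; first by exists v; rewrite ?inE ?eqxx.
  case: (eqVneq w a2) => [->|wa2]; first by exists v; rewrite ?inE ?eqxx.
  have wA : w \notin A by apply: contra hw => wA; rewrite !inE wa1 wa2 wA orbT.
  have [d dA1 edw] := domA1 w ltac:(by rewrite inE).
  exists d => //.
  by rewrite !inE A1_avoids_A2 // A1_avoids_A2 // -eqA inE dA1 orbT.
move/minA; rewrite cardsU1 (cardsD1 a1 A) (cardsD1 a2 (A :\ a1)) a1A !inE a2A.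
by rewrite eq_sym a12 (negbTE vA) /=; lia.
Qed.

Hypotheses (Hsym : symmetric e) (Hirr : irreflexive e).

(* A vertex of A2 has no neighbour in A: that neighbour dominates it and A1
   dominates the rest, so removing it from A would leave a dominating set. *)
Lemma sep_part2_nbr A A1 A2 a b : separable_partition e A A1 A2 ->
  a \in A2 -> b \in A -> ~~ e a b.
Proof.
move=> HA aA2 bA; apply/negP => eab.
have aA : a \in A by rewrite (sep_mem _ HA) aA2 orbT.
case: HA => [[_ minA] eqA dis _ domA1].
have : dominating e (A :\ a).
  move=> w; rewrite !inE negb_and negbK => /orP [/eqP->|wA].
    exists b; last by rewrite Hsym.
    by rewrite !inE bA andbT; apply: contraTneq eab => ->; rewrite Hirr.
  have [d dA1 edw] := domA1 w ltac:(by rewrite inE).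
  exists d => //; rewrite !inE -eqA inE dA1 andbT.
  by apply: contraTneq dA1 => ->; rewrite (disjointFl dis aA2).
by move/minA; rewrite (cardsD1 a A) aA; lia.
Qed.

End SeparableGammaSets.

Section StarShift.
Variables (T : finType) (e : rel T) (x : T).
Local Notation X := (cnbhd e x).

Definition star_shift (pi : {perm T}) :=
  (forall v, v \notin X -> pi v = v) /\ (forall v, v \in X -> pi v != v).

Lemma cnbhdE v : (v \in X) = (v == x) || e x v.
Proof. by rewrite !inE. Qed.

Lemma imset_permK (pi : {perm T}) (S : {set T}) : pi^-1%g @: (pi @: S) = S.
Proof. by rewrite -imset_comp (eq_imset _ (permK pi)) imset_id. Qed.

Variables (pi : {perm T}) (Hpi : star_shift pi).

Lemma shift_cnbhd v : (pi v \in X) = (v \in X).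
Proof.
case: Hpi => fixed moved; have [vX|vX] := boolP (v \in X); last by rewrite fixed // (negbTE vX).
by apply/negPn/negP => /fixed /(@perm_inj _ pi) pv; move: (moved v vX); rewrite pv eqxx.
Qed.

Lemma shift_nbr v : v \in X -> pi v != x -> e x (pi v).
Proof. by rewrite -(shift_cnbhd v) cnbhdE => /orP [/eqP->|]; rewrite ?eqxx. Qed.

Lemma shift_nbr_pre v : e x (pi v) -> v != x -> e x v.
Proof.
move=> expv vx; have : v \in X by rewrite -shift_cnbhd cnbhdE expv orbT.
by rewrite cnbhdE (negbTE vx).
Qed.

Lemma shift_outside (S : {set T}) d : d \notin X -> (d \in pi @: S) = (d \in S).
Proof.
by case: Hpi => fixed _ dX; rewrite -{1}(fixed d dX) mem_imset //; apply: perm_inj.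
Qed.

Lemma shift_inv : star_shift pi^-1%g.
Proof.
case: Hpi => fixed moved; split => v vX.
  by rewrite -{1}(fixed v vX) permK.
by apply: contra (moved v vX) => /eqP pv; rewrite -{1}pv permKV.
Qed.

End StarShift.

Section EffectiveConfiguration.
Variables (T : finType) (e : rel T) (x : T) (pi : {perm T}) (A A1 A2 : {set T}).
Hypotheses (Hsym : symmetric e) (Hirr : irreflexive e).
Hypotheses (Hx : C3_free_vertex e x) (Hpi : star_shift e x pi).
Hypotheses (HA : separable_partition e A A1 A2)
           (HB : separable_partition e (pi @: A) (pi @: A2) (pi @: A1)).
Local Notation X := (cnbhd e x).

(* If x \notin A1, a neighbour of x lying in B lies in A: otherwise A1
   dominates it by some d, which by C3-freeness lies outside X, hence d is in
   B2 next to a vertex of B. *)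
Lemma nbr_of_image y : x \notin A1 -> e x y -> y \in pi @: A -> y \in A.
Proof.
move=> xA1 exy yB; apply/negPn/negP => yA.
have [d dA1 edy] := sep_dominated HA yA.
have dX : d \notin X.
  rewrite cnbhdE negb_or; apply/andP; split.
    by apply: contraNneq xA1 => <-.
  by apply/negP => exd; case: Hx => _; apply; exists d, y; rewrite exd exy edy.
have dB2 : d \in pi @: A1 by rewrite (shift_outside Hpi _ dX).
by rewrite (negbTE (sep_part2_nbr Hsym Hirr HB dB2 yB)) in edy.
Qed.

(* If x is in A1, then pi x in B2 is a neighbour of
   x, so x is outside B and B1 = pi(A2) dominates it by some pi c with c a
   neighbour of x in A2.  If x is in A2, its neighbour pi x lies in B, hence
   in A by nbr_of_image.  Either way a vertex of A2 has a neighbour in A. *)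
Lemma center_notin : x \notin A.
Proof.
case: (Hpi) => _ moved.
have xX : x \in X by rewrite cnbhdE eqxx.
have expx : e x (pi x) := shift_nbr Hpi xX (moved x xX).
have xA1 : x \notin A1.
  apply/negP => xA1.
  have xB : x \notin pi @: A.
    apply/negP => xB; move: expx.
    by rewrite Hsym (negbTE (sep_part2_nbr Hsym Hirr HB (imset_f pi xA1) xB)).
  have [b /imsetP [c cA2 ->] epcx] := sep_dominated HB xB.
  have exc : e x c.
    apply: (shift_nbr_pre Hpi); first by rewrite Hsym.
    by apply: contraTneq cA2 => ->; apply/negP => /(sep_parts_disjoint HA xA1).
  have xA : x \in A by rewrite (sep_mem _ HA) xA1.
  by rewrite Hsym (negbTE (sep_part2_nbr Hsym Hirr HA cA2 xA)) in exc.
have xA2 : x \notin A2.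
  apply/negP => xA2.
  have pxA : pi x \in A.
    by apply: nbr_of_image => //; apply: imset_f; rewrite (sep_mem _ HA) xA2 orbT.
  by rewrite (negbTE (sep_part2_nbr Hsym Hirr HA xA2 pxA)) in expx.
by rewrite (sep_mem _ HA) negb_or xA1 xA2.
Qed.

End EffectiveConfiguration.

Section EffectiveConfigurationCenter.
Variables (T : finType) (e : rel T) (x : T) (pi : {perm T}) (A A1 A2 : {set T}).
Hypotheses (Hsym : symmetric e) (Hirr : irreflexive e).
Hypotheses (Hx : C3_free_vertex e x) (Hpi : star_shift e x pi).
Hypotheses (HA : separable_partition e A A1 A2)
           (HB : separable_partition e (pi @: A) (pi @: A2) (pi @: A1)).
Local Notation X := (cnbhd e x).

Let center_notin_A : x \notin A := center_notin Hsym Hirr Hx Hpi HA HB.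

(* By the symmetry (pi, A, A1, A2) <-> (pi^-1, B, B1, B2). *)
Lemma center_notin_image : x \notin pi @: A.
Proof.
have HA' : separable_partition e (pi^-1%g @: (pi @: A)) (pi^-1%g @: (pi @: A1))
                                 (pi^-1%g @: (pi @: A2)) by rewrite !imset_permK.
exact: (center_notin Hsym Hirr Hx (shift_inv Hpi) HB HA').
Qed.

Lemma shift_stable a : a \in A -> e x a -> (pi a \in A) && e x (pi a).
Proof.
move=> aA exa.
have expa : e x (pi a).
  apply: (shift_nbr Hpi); first by rewrite cnbhdE exa orbT.
  by apply: contraNneq center_notin_image => <-; apply: imset_f.
have xA1 : x \notin A1.
  by apply: contra center_notin_A => xA1; rewrite (sep_mem _ HA) xA1.
by rewrite expa (nbr_of_image Hsym Hirr Hx Hpi HA HB xA1 expa (imset_f pi aA)).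
Qed.

(* A n N(x) is {c, d} with d in A1, c in A2, and pi swaps c and d. *)
Lemma center_nbrs_swapped :
  exists c d, [/\ e x c, e x d, c != d, pi c = d & pi d = c].
Proof.
case: (Hpi) => _ moved.
have xA := center_notin_A; have xB := center_notin_image.
have [d dA1 edx] := sep_dominated HA xA.
have exd : e x d by rewrite Hsym.
have dA : d \in A by rewrite (sep_mem _ HA) dA1.
have [_ /imsetP [c cA2 ->] epcx] := sep_dominated HB xB.
have expc : e x (pi c) by rewrite Hsym.
have cA : c \in A by rewrite (sep_mem _ HA) cA2 orbT.
have exc : e x c by apply: (shift_nbr_pre Hpi expc); apply: contraNneq xA => <-.
have pair a : a \in A -> e x a -> (a == c) || (a == d).
  move=> aA exa; move: (aA); rewrite (sep_mem _ HA) => /orP [aA1|aA2].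
    have [_ expa] := andP (shift_stable aA exa).
    have [_ expd] := andP (shift_stable dA exd).
    have := sep_part2_private HB xB (imset_f pi aA1) (imset_f pi dA1) expa expd.
    by move/perm_inj ->; rewrite eqxx orbT.
  by rewrite (sep_part2_private HA xA aA2 cA2 exa exc) eqxx.
have cd : c != d by apply: contraTneq cA2 => ->; apply/negP/(sep_parts_disjoint HA).
have cX : c \in X by rewrite cnbhdE exc orbT.
have dX : d \in X by rewrite cnbhdE exd orbT.
exists c, d; split => //.
  have /andP [pcA epc] := shift_stable cA exc.
  by move: (pair _ pcA epc); rewrite (negbTE (moved c cX)) => /eqP.
have /andP [pdA epd] := shift_stable dA exd.
by move: (pair _ pdA epd); rewrite (negbTE (moved d dX)) orbF => /eqP.
Qed.

End EffectiveConfigurationCenter.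

Theorem mainTheorem2 (T : finType) (e : rel T) (x : T) (pi : {perm T}) :
  simple_graph e ->
  C3_free_vertex e x ->
  (forall v, v \notin cnbhd e x -> pi v = v) ->
  (forall v, v \in cnbhd e x -> pi v != v) ->
  (2 <= #|nbhd e x| ->
     forall u v, u \in cnbhd e x -> v \in cnbhd e x -> pi v = u -> pi u != v) ->
  forall A A1 A2 : {set T},
    separable_partition e A A1 A2 -> ~ effective e pi A A1 A2.
Proof.
move=> [Hsym Hirr] Hx fixed moved no_swap A A1 A2 HA HB.
have [c [d [exc exd cd pcd pdc]]] :=
  center_nbrs_swapped Hsym Hirr Hx (conj fixed moved) HA HB.
have two_nbrs : 2 <= #|nbhd e x|.
  have cd_nbrs : [set c; d] \subset nbhd e x.
    by apply/subsetP => v; rewrite !inE => /orP [] /eqP ->.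
  by have := subset_leq_card cd_nbrs; rewrite cards2 cd.
have cX : c \in cnbhd e x by rewrite cnbhdE exc orbT.
have dX : d \in cnbhd e x by rewrite cnbhdE exd orbT.
by move: (no_swap two_nbrs d c dX cX pcd); rewrite pdc eqxx.
Qed.
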